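(* Let $d>1$ and let $S$ be a collection of at most $d$ simplices over $[n]$, each of dimension at most $d$. Then all $d$-faces and all $(d-1)$-faces of $K(S)$ can be eliminated by a sequence of elementary $(d-1)$- and $(d-2)$-collapses (starting from $K(S)$).
   Context: A $d$-simplex is a subset of $[n]$ of size $d+1$; a simplicial complex is a family of simplices closed under taking subsets. For a set $S$ of simplices, $K(S)$ is the complex of all subsets of members of $S$. In a simplicial complex $K$, an $i$-face $\zeta$ is exposed if it is contained in exactly one $(i+1)$-face $\tau$ of $K$ (such $\tau$ is then necessarily a maximal face). An elementary $i$-collapse is the removal of such a pair $\zeta,\tau$ from $K$; the result is again a simplicial complex. *)

(* Vertices are 'I_n (= [n]); simplices are finite sets of
   vertices; a complex is a set of simplices. An i-face has i+1 vertices. *)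
From mathcomp Require Import all_boot.
Set Implicit Arguments. Unset Strict Implicit. Unset Printing Implicit Defensive.

Definition Kc (n : nat) (S : {set {set 'I_n}}) : {set {set 'I_n}} :=
  [set z : {set 'I_n} | [exists s in S, z \subset s]].

Definition exposed_by (n i : nat) (K : {set {set 'I_n}}) (zeta tau : {set 'I_n}) : Prop :=
  [/\ zeta \in K /\ #|zeta| = i.+1, tau \in K /\ #|tau| = i.+2, zeta \subset tau &
      (forall t, t \in K -> #|t| = i.+2 -> zeta \subset t -> t = tau)].

Definition elem_collapse (n i : nat) (K K' : {set {set 'I_n}}) : Prop :=
  exists zeta tau, exposed_by i K zeta tau /\ K' = K :\: [set zeta; tau].

Inductive collapses_to (n : nat) (I : seq nat) :
    {set {set 'I_n}} -> {set {set 'I_n}} -> Prop :=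
  | ct_refl K : collapses_to I K K
  | ct_step i K K1 K' : i \in I -> elem_collapse i K K1 ->
      collapses_to I K1 K' -> collapses_to I K K'.

From mathcomp Require Import all_boot zify.
From Stdlib Require Import Classical.
Set Implicit Arguments. Unset Strict Implicit. Unset Printing Implicit Defensive.

(* Remove the simplices s of S one at a time, keeping a complex K that has the
   same faces of size >= d as K(S).  If s lies in another simplex nothing
   changes.  Otherwise fewer than #|s| simplices remain, so by pigeonhole some
   facet of s lies in no other simplex; it is exposed in s and collapses with it.
   If #|s| = d + 1, the facets of s not in K(S \ s) are then removed one by one,
   each through a free ridge s \ {a, b} with s \ b already gone: were all such
   ridges blocked, every blocker s' would have s \ s' of size at most 2, and
   this would inject the d facets of s other than a given one into the fewer
   than d remaining simplices. *)

Lemma card_le_rel (T U : finType) (R : T -> U -> bool) (A : {set T}) (B : {set U}) :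
  (forall x, x \in A -> exists2 y, y \in B & R x y) ->
  (forall x1 x2 y, x1 \in A -> x2 \in A -> y \in B -> R x1 y -> R x2 y -> x1 = x2) ->
  #|A| <= #|B|.
Proof.
move=> covered R_inj.
have sub : Some @: A \subset (fun y => [pick x in A | R x y]) @: B.
  apply/subsetP=> _ /imsetP[x xA ->]; have [y yB Rxy] := covered x xA.
  apply/imsetP; exists y => //; case: pickP => [x' /andP[x'A Rx'y]|/(_ x)].
    by rewrite (R_inj x' x y).
  by rewrite xA Rxy.
rewrite -(card_imset A (@Some_inj _)).
exact: leq_trans (subset_leq_card sub) (leq_imset_card _ _).
Qed.

Lemma setUD1 (T : finType) (A : {set T}) a1 a2 : a1 != a2 -> A :\ a1 :|: A :\ a2 = A.
Proof.
move=> a12; apply/setP=> x; rewrite !inE -andb_orl.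
by case: (eqVneq x a1) => [->|xa1]; rewrite ?a12 ?xa1.
Qed.

Lemma card_setD1 (T : finType) (A : {set T}) a : a \in A -> #|A :\ a| = #|A|.-1.
Proof. by move=> aA; rewrite (cardsD1 a A) aA. Qed.

Lemma facet_of_subset (T : finType) (B A : {set T}) :
  B \subset A -> #|B|.+1 = #|A| -> exists2 a, a \in A & B = A :\ a.
Proof.
move=> BA cardB.
have /cards1P[a AB] : #|A :\: B| == 1 by rewrite cardsDS // -cardB subSnn.
have /setDP[aA _] : a \in A :\: B by rewrite AB set11.
exists a => //; rewrite -AB setDDr setDv set0U; exact/esym/setIidPr.
Qed.

Section Collapses.
Variable n : nat.
Implicit Types (S K L : {set {set 'I_n}}) (s t z : {set 'I_n}) (I : seq nat).

(* Collapses of dimension d-1 and d-2 only keep faces of size >= d-1 closed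
   under subsets, so smaller faces are ignored. *)
Definition subset_closed k K :=
  forall t z, t \in K -> z \subset t -> k <= #|z| -> z \in K.

Definition large_in d K L := forall z, z \in K -> d <= #|z| -> z \in L.

Lemma collapses_to_trans I K1 K2 K3 :
  collapses_to I K1 K2 -> collapses_to I K2 K3 -> collapses_to I K1 K3.
Proof. by elim=> // i K K' K'' iI KK' _ IH /IH; exact: ct_step iI KK'. Qed.

Lemma KcP S z : reflect (exists2 s, s \in S & z \subset s) (z \in Kc S).
Proof.
rewrite inE; apply: (iffP existsP) => [[s /andP[]]|[s sS zs]]; first by exists s.
by exists s; rewrite sS.
Qed.

Lemma Kc0 : Kc (set0 : {set {set 'I_n}}) = set0.
Proof. by apply/setP=> z; rewrite in_set0; apply/KcP=> -[s]; rewrite in_set0. Qed.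

Lemma Kc_subset_closed k S : subset_closed k (Kc S).
Proof.
move=> t z /KcP[s sS ts] zt _; apply/KcP; exists s => //; exact: subset_trans ts.
Qed.

Lemma KcS S1 S2 z : S1 \subset S2 -> z \in Kc S1 -> z \in Kc S2.
Proof. by move=> S12 /KcP[s sS zs]; apply/KcP; exists s => //; apply: (subsetP S12). Qed.

Lemma Kc_setD1 S s z : z \in Kc S -> z \subset s \/ z \in Kc (S :\ s).
Proof.
case/KcP=> s' s'S zs'; case: (eqVneq s' s) => [<-|s's]; first by left.
by right; apply/KcP; exists s'; rewrite // !inE s's.
Qed.

Lemma exposed_cofaces k i K zeta tau t :
  k <= i.+1 -> subset_closed k K -> exposed_by i K zeta tau ->
  t \in K -> zeta \subset t -> t = zeta \/ t = tau.
Proof.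
move=> ki closedK [[_ card_zeta] _ zeta_tau tau_uniq] tK zeta_t.
have grow x : x \in t -> x \notin zeta -> x |: zeta = tau.
  move=> xt xzeta; have card_xzeta : #|x |: zeta| = i.+2 by rewrite cardsU1 xzeta card_zeta.
  apply: tau_uniq (subsetUr _ _) => //; apply: (closedK t) => //.
    by rewrite subUset sub1set xt.
  by rewrite card_xzeta; lia.
case: (boolP (t \subset zeta)) => [t_zeta|/subsetPn[x xt xzeta]].
  by left; apply/eqP; rewrite eqEsubset t_zeta.
right; apply/eqP; rewrite eqEsubset -(grow x xt xzeta) subUset sub1set xt zeta_t !andbT.
apply/subsetP=> y yt; case: (boolP (y \in zeta)) => yzeta; first exact: setU1r.
by rewrite (grow x xt xzeta) -(grow y yt yzeta) setU11.
Qed.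

Lemma subset_closed_collapse k i K zeta tau :
  k <= i.+1 -> subset_closed k K -> exposed_by i K zeta tau ->
  subset_closed k (K :\: [set zeta; tau]).
Proof.
move=> ki closedK exp t z; rewrite !inE negb_or => /andP[/andP[t_zeta t_tau] tK] zt kz.
rewrite (closedK t z tK zt kz) andbT; have [_ _ zeta_tau _] := exp.
apply/negP=> /orP[]/eqP ez; subst z;
  [have zeta_t := zt | have zeta_t := subset_trans zeta_tau zt];
  by case: (exposed_cofaces ki closedK exp tK zeta_t) => et; rewrite et eqxx in t_zeta t_tau.
Qed.

Lemma uncovered_facet S s :
  (forall s', s' \in S -> ~~ (s \subset s')) -> #|S| < #|s| ->
  exists2 a, a \in s & forall s', s' \in S -> ~~ (s :\ a \subset s').
Proof.
move=> s_uncov ltSs.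
case: (boolP [exists a in s, [forall s' in S, ~~ (s :\ a \subset s')]]).
  by case/exists_inP=> a sa /forall_inP; exists a.
move/exists_inPn=> covered; suff : #|s| <= #|S| by rewrite leqNgt ltSs.
apply: (@card_le_rel _ _ (fun a s' => s :\ a \subset s')) => [a sa|a1 a2 s' _ _ s'S sub1 sub2].
  by have /forall_inPn[s' s'S] := covered a sa; rewrite negbK; exists s'.
apply/eqP; apply: contraNT (s_uncov s' s'S) => a12.
by rewrite -(setUD1 s a12) subUset sub1 sub2.
Qed.

Definition collapses_onto_Kc d S K :=
  exists2 K1, collapses_to [:: d.-1; d.-2] K K1 &
    [/\ subset_closed d.-1 K1, large_in d K1 (Kc S) & large_in d (Kc S) K1].

Section FacetCleanup.
Variables (d : nat) (S : {set {set 'I_n}}) (s : {set 'I_n}) (b0 : 'I_n).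
Hypotheses (d_gt1 : 1 < d) (card_s : #|s| = d.+1) (card_S : #|S| < d)
  (s_uncov : forall s', s' \in S -> ~~ (s \subset s')) (b0s : b0 \in s).

Definition large_in_Kc_or_s K := forall z, z \in K -> d <= #|z| -> z \in Kc S \/ z \subset s.

Lemma predd2S : d.-2.+1 = d.-1.
Proof. by case: d d_gt1 => [|[]]. Qed.

Lemma predd2SS : d.-2.+2 = d.
Proof. by case: d d_gt1 => [|[]]. Qed.

Lemma card_facet c : c \in s -> #|s :\ c| = d.
Proof. by move=> sc; rewrite card_setD1 // card_s. Qed.

Lemma blocked_ridge K a b t :
  large_in d (Kc S) K -> large_in_Kc_or_s K ->
  a \in s -> b \in s -> s :\ a \notin Kc S -> s :\ b \notin K ->
  t \in K -> #|t| = d -> s :\: [set a; b] \subset t -> t != s :\ a ->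
  exists2 s', s' \in S & s :\: s' = [set a; b].
Proof.
move=> KcS_K K_large sa sb a_free b_gone tK card_t ridge_t t_a.
case: (K_large t tK) => [|/KcP[s' s'S ts']|ts]; first by rewrite card_t.
  have ridge_s' := subset_trans ridge_t ts'.
  have facet_s' c c' : s :\: [set c; c'] \subset s' -> c \in s' -> s :\ c' \subset s'.
    move=> ridge cs'; apply/subsetP=> x; rewrite !inE => /andP[xc' xs].
    case: (eqVneq x c) => [->//|xc]; apply: (subsetP ridge).
    by rewrite !inE negb_or xc xc' xs.
  have as' : a \notin s'.
    apply: contra b_gone => as'; apply: KcS_K; last by rewrite card_facet.
    by apply/KcP; exists s'; last exact: facet_s' ridge_s' as'.
  have bs' : b \notin s'.
    apply: contra a_free => bs'; apply/KcP; exists s' => //.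
    by apply: facet_s' bs'; rewrite setUC.
  exists s' => //; apply/eqP; rewrite eqEsubset subDset setUC -subDset ridge_s' /=.
  by rewrite subUset !sub1set !inE as' bs' sa sb.
have [c sc tc] : exists2 c, c \in s & t = s :\ c by apply: facet_of_subset; rewrite // card_t.
subst t; case: (eqVneq c a) => [ca|ca]; first by rewrite ca eqxx in t_a.
case: (eqVneq c b) => [cb|cb]; first by rewrite -cb tK in b_gone.
have /(subsetP ridge_t) : c \in s :\: [set a; b] by rewrite !inE negb_or ca cb sc.
by rewrite !inE eqxx.
Qed.

(* If no pair works, every admissible pair is blocked, and the blockers of
   the pairs (v, b0), (a0, v) and of the facets s :\ v lying in K(S) inject
   the d facets other than s :\ a0 into S. *)
Lemma free_ridge K a0 :
  large_in d (Kc S) K -> large_in_Kc_or_s K -> s :\ b0 \notin K ->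
  a0 \in s -> s :\ a0 \in K -> s :\ a0 \notin Kc S ->
  exists a b, [/\ a \in s, b \in s, s :\ a \in K, s :\ a \notin Kc S & s :\ b \notin K] /\
    (forall t, t \in K -> #|t| = d -> s :\: [set a; b] \subset t -> t = s :\ a).
Proof.
move=> KcS_K K_large b_gone a0s a0K a0_free; apply: NNPP => no_free_ridge.
have blocker a b : a \in s -> b \in s -> s :\ a \in K -> s :\ a \notin Kc S ->
    s :\ b \notin K -> exists2 s', s' \in S & s :\: s' = [set a; b].
  move=> sa sb aK a_free b_gone'; apply: NNPP => no_blocker.
  apply: no_free_ridge; exists a, b; split => // t tK card_t ridge_t.
  apply: NNPP => t_a; apply: no_blocker.
  by apply: (blocked_ridge KcS_K K_large) ridge_t _ => //; apply/eqP.
pose R v s' := (v \in s :\: s') && (s :\: s' \subset [set v; a0; b0]).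
suff : #|s :\ a0| <= #|S| by rewrite card_facet // leqNgt card_S.
apply: (@card_le_rel _ _ R) => [v /setD1P[va0 sv]|v1 v2 s' v1s v2s _].
  case: (boolP (s :\ v \in Kc S)) => [/KcP[s' s'S sub]|v_free].
    have vs' : v \notin s'.
      apply: contra (s_uncov s'S) => vs'.
      by rewrite -(setD1K sv) subUset sub1set vs'.
    exists s' => //; rewrite /R inE vs' sv /=; apply: subset_trans (_ : [set v] \subset _).
      by rewrite subDset setUC -subDset.
    by rewrite sub1set !inE eqxx.
  case: (boolP (s :\ v \in K)) => [vK|v_gone].
    have [s' s'S Ds'] := blocker v b0 sv b0s vK v_free b_gone.
    by exists s'; rewrite // /R Ds' !inE eqxx subUset !sub1set !inE !eqxx !orbT.
  have [s' s'S Ds'] := blocker a0 v a0s sv a0K a0_free v_gone.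
  by exists s'; rewrite // /R Ds' !inE eqxx subUset !sub1set !inE !eqxx !orbT.
case/setD1P: v1s => v1a0 _; case/setD1P: v2s => v2a0 _.
case/andP=> v1D D1 /andP[v2D D2].
move: (subsetP D1 v2 v2D) (subsetP D2 v1 v1D); rewrite !inE (negbTE v1a0) (negbTE v2a0) !orbF.
by case/orP=> /eqP-> // /orP[/eqP|/eqP->].
Qed.

Definition facet_cleanup_inv K :=
  [/\ subset_closed d.-1 K, large_in d (Kc S) K, large_in_Kc_or_s K,
      s \notin K & s :\ b0 \notin K].

Lemma ridge_collapse K z :
  facet_cleanup_inv K -> z \in K -> d <= #|z| -> z \notin Kc S ->
  exists2 K', elem_collapse d.-2 K K' & #|K'| < #|K| /\ facet_cleanup_inv K'.
Proof.
move=> [closedK KcS_K K_large sK b_gone] zK dz z_free.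
have zs : z \subset s by case: (K_large z zK dz) => //; rewrite (negbTE z_free).
have [a0 a0s ez] : exists2 a0, a0 \in s & z = s :\ a0.
  apply: (facet_of_subset zs).
  have : #|z| < #|s|.
    by apply: proper_card; rewrite properEneq zs andbT; apply: contraNneq sK => <-.
  by move: dz; rewrite card_s; lia.
subst z; have [a [b [[sa sb aK a_free b_gone'] ridge_uniq]]] :=
  free_ridge KcS_K K_large b_gone a0s zK z_free.
have ab : a != b by apply: contraNneq b_gone' => <-.
set r := s :\: [set a; b].
have card_r : #|r| = d.-1.
  rewrite cardsDS; last by rewrite subUset !sub1set sa sb.
  by rewrite cards2 ab card_s subSS subn1.
have r_a : r \subset s :\ a by rewrite setDS // sub1set !inE eqxx.
have exp : exposed_by d.-2 K r (s :\ a).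
  split; [split | split | exact: r_a | ].
  - by apply: (closedK _ _ aK r_a); rewrite card_r.
  - by rewrite card_r predd2S.
  - exact: aK.
  - by rewrite card_facet // predd2SS.
  - by move=> t tK; rewrite predd2SS; apply: ridge_uniq.
exists (K :\: [set r; s :\ a]); first by exists r, (s :\ a).
split; first apply: leq_ltn_trans (proper_card (properD1 aK)).
  by apply/subset_leq_card/setDS; rewrite sub1set !inE eqxx orbT.
split.
- by apply: subset_closed_collapse closedK exp; rewrite predd2S.
- move=> t tS dt; rewrite !inE (KcS_K t tS dt) andbT negb_or.
  apply/andP; split; apply/eqP=> et.
    by move: dt; rewrite et card_r -predd2S -[X in X <= _]predd2SS ltnn.
  by move: a_free; rewrite -et tS.
- by move=> t /setDP[tK _]; apply: K_large.
- by rewrite inE negb_and sK orbT.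
- by rewrite inE negb_and b_gone orbT.
Qed.

Lemma collapse_facets K : facet_cleanup_inv K -> collapses_onto_Kc d S K.
Proof.
have [m] := ubnP #|K|; elim: m K => // m IH K ltKm inv.
case: (boolP [forall z in K, (d <= #|z|) ==> (z \in Kc S)]) => [/forall_inP K_KcS|].
  case: inv => closedK KcS_K _ _ _; exists K; first exact: ct_refl.
  by split=> // z zK; apply/implyP/K_KcS.
case/forall_inPn=> z zK; rewrite negb_imply => /andP[dz z_free].
have [K' collapse [ltK'K inv']] := ridge_collapse inv zK dz z_free.
have [|K1 K'K1 final] := IH K' _ inv'; first by lia.
by exists K1 => //; apply: ct_step collapse K'K1; rewrite !inE eqxx orbT.
Qed.

End FacetCleanup.

Lemma exposed_uncovered_facet d S s K a :
  1 < d -> d <= #|s| -> subset_closed d.-1 K -> s \in K -> large_in_Kc_or_s d S s K ->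
  a \in s -> (forall s', s' \in S -> ~~ (s :\ a \subset s')) ->
  exposed_by #|s|.-2 K (s :\ a) s.
Proof.
move=> d_gt1 big closedK sK K_large sa a_uncov.
have card_sa : #|s :\ a| = #|s|.-2.+1 by rewrite card_setD1 //; lia.
split; [split => // | split => //; lia | exact: subD1set | ].
  by apply: (closedK s) sK (subD1set s a) _; rewrite card_sa; lia.
move=> t tK card_t sa_t; case: (K_large t tK) => [|/KcP[s' s'S ts']|ts].
- by rewrite card_t; lia.
- by have := a_uncov s' s'S; rewrite (subset_trans sa_t ts').
- by apply/eqP; rewrite eqEcard ts card_t; lia.
Qed.

Lemma collapse_simplex d S s K :
  1 < d -> #|S| <= d -> s \in S -> #|s| <= d.+1 ->
  subset_closed d.-1 K -> large_in d (Kc S) K -> large_in d K (Kc S) ->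
  collapses_onto_Kc d (S :\ s) K.
Proof.
move=> d_gt1 card_S sS card_s closedK KcS_K K_KcS.
have card_S' : #|S :\ s| < d by move: card_S; rewrite (cardsD1 s S) sS.
have KcS'_K : large_in d (Kc (S :\ s)) K.
  by move=> z /(KcS (subD1set S s)); apply: KcS_K.
have K_large : large_in_Kc_or_s d (S :\ s) s K.
  by move=> z zK dz; case: (Kc_setD1 s (K_KcS z zK dz)); [right | left].
have keep_K : #|s| < d \/ s \in Kc (S :\ s) -> collapses_onto_Kc d (S :\ s) K.
  move=> small_or_covered; exists K; first exact: ct_refl.
  split=> // z zK dz; case: (K_large z zK dz) => // zs.
  case: small_or_covered => [small|/KcP[s' s'S ss']].
    by move: (subset_leq_card zs); lia.
  by apply/KcP; exists s'; last exact: subset_trans ss'.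
case: (ltnP #|s| d) => [small|big]; first by apply: keep_K; left.
case: (boolP (s \in Kc (S :\ s))) => [covered|s_free]; first by apply: keep_K; right.
have s_uncov s' : s' \in S :\ s -> ~~ (s \subset s').
  by move=> s'S; apply: contra s_free => ss'; apply/KcP; exists s'.
have [a sa a_uncov] := uncovered_facet s_uncov (leq_trans card_S' big).
have a_free : s :\ a \notin Kc (S :\ s).
  by apply/negP=> /KcP[s' s'S sub]; have := a_uncov s' s'S; rewrite sub.
have sK : s \in K by apply: KcS_K big; apply/KcP; exists s.
have exp := exposed_uncovered_facet d_gt1 big closedK sK K_large sa a_uncov.
have collapse_sa : collapses_to [:: d.-1; d.-2] K (K :\: [set s :\ a; s]).
  have dim_s : #|s|.-2 \in [:: d.-1; d.-2].
    by rewrite !inE; apply/orP; case: (ltnP #|s| d.+1) => ?; [right | left]; apply/eqP; lia.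
  by apply: (ct_step dim_s _ (ct_refl _ _)); exists (s :\ a), s.
have closedK' : subset_closed d.-1 (K :\: [set s :\ a; s]).
  by apply: subset_closed_collapse closedK exp; lia.
have KcS'_K' : large_in d (Kc (S :\ s)) (K :\: [set s :\ a; s]).
  move=> z zS dz; rewrite !inE (KcS'_K z zS dz) andbT negb_or.
  by apply/andP; split; apply: contraTneq zS => ->.
have K'_large : large_in_Kc_or_s d (S :\ s) s (K :\: [set s :\ a; s]).
  by move=> z /setDP[zK _]; apply: K_large.
case: (eqVneq #|s| d) => [card_sd|card_sd].
  exists (K :\: [set s :\ a; s]) => //; split=> // z zK' dz.
  case: (K'_large z zK' dz) => // zs; move: zK'.
  suff -> : z = s by rewrite !inE eqxx orbT.
  by apply/eqP; rewrite eqEcard zs card_sd.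
have card_s1 : #|s| = d.+1 by lia.
have inv : facet_cleanup_inv d (S :\ s) s a (K :\: [set s :\ a; s]).
  by split=> //; rewrite !inE eqxx ?orbT.
have [K1 K'K1 final] := collapse_facets d_gt1 card_s1 card_S' s_uncov sa inv.
by exists K1 => //; apply: collapses_to_trans collapse_sa K'K1.
Qed.

Lemma collapses_onto_Kc0 d S K :
  1 < d -> #|S| <= d -> (forall s, s \in S -> #|s| <= d.+1) ->
  subset_closed d.-1 K -> large_in d (Kc S) K -> large_in d K (Kc S) ->
  collapses_onto_Kc d set0 K.
Proof.
move=> d_gt1; have [m] := ubnP #|S|; elim: m S K => // m IH S K ltSm card_S card_s.
case: (set_0Vmem S) => [-> closedK _ K_Kc0|[s sS] closedK KcS_K K_KcS].
  by exists K; first exact: ct_refl; split=> // z; rewrite Kc0 inE.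
have [K1 KK1 [closedK1 K1_KcS' KcS'_K1]] :=
  collapse_simplex d_gt1 card_S sS (card_s s sS) closedK KcS_K K_KcS.
have card_S' : #|S :\ s| < #|S| by rewrite (cardsD1 s S) sS.
have [|||K2 K1K2 final] := IH (S :\ s) K1 _ _ _ closedK1 KcS'_K1 K1_KcS'.
- by lia.
- by lia.
- by move=> s' /setD1P[_ /card_s].
by exists K2 => //; apply: collapses_to_trans KK1 K1K2.
Qed.

End Collapses.

Theorem claim3p3 (n d : nat) (S : {set {set 'I_n}}) :
  1 < d -> #|S| <= d -> (forall s, s \in S -> #|s| <= d.+1) ->
  exists K', collapses_to [:: d.-1; d.-2] (Kc S) K' /\
    (forall z, z \in K' -> #|z| != d.+1 /\ #|z| != d).
Proof.
move=> d_gt1 card_S card_s.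
have [K' SK' [_ K'_empty _]] := collapses_onto_Kc0 d_gt1 card_S card_s
  (@Kc_subset_closed _ _ S) (fun z zS _ => zS) (fun z zK _ => zK).
exists K'; split=> // z zK'; suff : #|z| < d by lia.
by rewrite ltnNge; apply/negP=> /(K'_empty z zK'); rewrite Kc0 inE.
Qed.
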